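(* For $n\in\mathcal{N}_{z_q}$, let $L_n=\{(x_\gamma,y_\gamma):\gamma\in\Gamma_{z_q,n}\}$ and \[ \mathcal{L}_n=\{(x,y)\in\mathbb{R}^2:\ x^2+y^2=n^2-4\lambda^4,\ y\equiv n \pmod{2\lambda^2},\ x\equiv 0\pmod{\lambda}\}. \] Then $L_n=\mathcal{L}_n$, and $|\mathcal{L}_n|=2c_n\,r_K(n^2-4\lambda^4)$, where $c_n=1/2$ if ($q$ even and $2\mid n$) or ($q$ odd and $q\mid 2n$), and $c_n=1/4$ otherwise.
   Context: Let $q\in\{3,4,7,8,11,19,43,67,163\}$, $K$ the imaginary quadratic field of discriminant $-q$ (class number one), ring of integers $\mathcal{O}_K$; $r_K(M)$ is the number of elements of $\mathcal{O}_K$ of norm $M$. Let $z_q=\mu+i\lambda$ with $\mu=0$ if $q\in\{4,8\}$, $\mu=1/2$ otherwise, $\lambda=\sqrt q/2$. $\mathbb{H}$ is the upper half-plane with hyperbolic distance $\rho$, $\cosh\rho(z,w)=1+\frac{|z-w|^2}{2\,\mathrm{Im}(z)\mathrm{Im}(w)}$; $\Gamma=\mathrm{PSL}(2,\mathbb{Z})$; $\mathcal{R}(\gamma;z_q)=2\lambda^2\cosh\rho(z_q,\gamma z_q)$, $\mathcal{N}_{z_q}=\{\mathcal{R}(\gamma;z_q):\gamma\in\Gamma\}$, $\Gamma_{z_q,n}=\{\gamma:\mathcal{R}(\gamma;z_q)=n\}$. Congruences $y\equiv n\pmod{2\lambda^2}$, $x\equiv0\pmod\lambda$ mean $(y-n)/(2\lambda^2)\in\mathbb{Z}$,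 $x/\lambda\in\mathbb{Z}$. For $\gamma=\begin{pmatrix}a&b\\c&d\end{pmatrix}$ with $n=\mathcal{R}(\gamma;z_q)$: $x_\gamma=2\lambda((\mu a+b)(\mu c+d)+\lambda^2ac-\mu((\mu c+d)^2+\lambda^2c^2))$, $y_\gamma=n-2\lambda^2((\mu c+d)^2+\lambda^2c^2)$. *)

From Stdlib Require Import Reals Lra Lia ZArith List ClassicalDescription.
From Coquelicot Require Import Coquelicot.
Import ListNotations.
Open Scope R_scope.

Definition qlist : list nat := [3;4;7;8;11;19;43;67;163]%nat.

Definition lam (q : nat) : R := sqrt (INR q) / 2.
Definition mu (q : nat) : R :=
  if (Nat.eqb q 4 || Nat.eqb q 8)%bool then 0 else 1/2.

Definition zq (q : nat) : C := (mu q, lam q).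

Definition mobius (a b c d : Z) (z : C) : C :=
  Cdiv (Cplus (Cmult (RtoC (IZR a)) z) (RtoC (IZR b)))
       (Cplus (Cmult (RtoC (IZR c)) z) (RtoC (IZR d))).

Definition cosh_rho (z w : C) : R :=
  1 + (Cmod (Cminus z w)) ^ 2 / (2 * Im z * Im w).

(* (a b; c d) in SL(2,Z); PSL(2,Z) = SL(2,Z)/{±1}, all quantities below are
   invariant under (a,b,c,d) -> (-a,-b,-c,-d). *)
Definition in_SL2Z (a b c d : Z) : Prop := (a * d - b * c)%Z = 1%Z.

Definition Rval (q : nat) (a b c d : Z) : R :=
  2 * lam q ^ 2 * cosh_rho (zq q) (mobius a b c d (zq q)).

Definition in_Nzq (q : nat) (n : R) : Prop :=
  exists a b c d : Z, in_SL2Z a b c d /\ Rval q a b c d = n.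

Definition x_gamma (q : nat) (a b c d : Z) : R :=
  let m := mu q in let l := lam q in
  let a' := IZR a in let b' := IZR b in let c' := IZR c in let d' := IZR d in
  2 * l * ((m * a' + b') * (m * c' + d') + l ^ 2 * a' * c'
           - m * ((m * c' + d') ^ 2 + l ^ 2 * c' ^ 2)).

Definition y_gamma (q : nat) (n : R) (c d : Z) : R :=
  let m := mu q in let l := lam q in
  let c' := IZR c in let d' := IZR d in
  n - 2 * l ^ 2 * ((m * c' + d') ^ 2 + l ^ 2 * c' ^ 2).

Definition L_set (q : nat) (n : R) (p : R * R) : Prop :=
  exists a b c d : Z, in_SL2Z a b c d /\ Rval q a b c d = n /\
    fst p = x_gamma q a b c d /\ snd p = y_gamma q n c d.

Definition is_int (r : R) : Prop := exists k : Z, r = IZR k.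

Definition Lcal (q : nat) (n : R) (p : R * R) : Prop :=
  let x := fst p in let y := snd p in
  x ^ 2 + y ^ 2 = n ^ 2 - 4 * lam q ^ 4 /\
  is_int ((y - n) / (2 * lam q ^ 2)) /\
  is_int (x / lam q).

(* O_K = Z[z_q] (z_q generates the ring of integers in all nine cases);
   the element a + b z_q is encoded by the pair (a,b), and its norm is |a + b z_q|^2. *)
Definition normK (q : nat) (ab : Z * Z) : R :=
  (Cmod (Cplus (RtoC (IZR (fst ab))) (Cmult (RtoC (IZR (snd ab))) (zq q)))) ^ 2.

Definition divR (m : Z) (x : R) : Prop := exists k : Z, x = IZR k * IZR m.

Definition cn_cond (q : nat) (n : R) : Prop :=
  (Nat.Even q /\ divR 2 n) \/ (~ Nat.Even q /\ divR (Z.of_nat q) (2 * n)).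

Definition c_n (q : nat) (n : R) : R :=
  if excluded_middle_informative (cn_cond q n) then 1/2 else 1/4.

(* Put t = 2 mu and e = |z_q|^2, so that z = z_q satisfies z^2 = t z - e and O_K = Z[z] has the
   norm form a^2 + t a b + e b^2 of discriminant -q.  For gamma = (a b; c d) one finds
   R(gamma; z) = q/2 + F with F = |c z^2 + (d - a) z - b|^2, x_gamma = lambda j and
   y_gamma = n - 2 lambda^2 k with k = |c z + d|^2, and the identity 4 k F = j^2 + q (k - 1)^2
   puts (x_gamma, y_gamma) on the circle of calL_n.  Conversely a lattice point (j, k) of that
   circle gives a binary quadratic form of discriminant -q with first coefficient k; as the
   class number is one, Gauss reduction finds gamma carrying the norm form to it, so
   L_n = calL_n.
   With n = (q + 2 F)/2, a + b z |-> (b, (2 a + t b + 2 n)/q) is a bijection from the elements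
   of norm n^2 - 4 lambda^4 = F (q + F) satisfying q | 2 a + t b + 2 n onto calL_n.  When
   c_n = 1/2 every such element satisfies the divisibility; otherwise exactly one of alpha and
   -conj alpha does (q prime or q = 8), resp. one of alpha and i conj alpha (q = 4). *)

From Stdlib Require Import Reals ZArith List Lia Lra Znumtheory ClassicalDescription.
From Coquelicot Require Import Coquelicot.

Local Open Scope Z_scope.

(** * The norm form of Z[z] *)

(* [qnorm t e a b] is the norm of a + b z and [qpolar t e a b c d] the polarisation
   N(u + v) - N(u) - N(v) for u = a + b z, v = c + d z, where z^2 = t z - e. *)
Definition qnorm (t e a b : Z) : Z := a * a + t * a * b + e * b * b.
Definition qpolar (t e a b c d : Z) : Z := 2 * a * c + t * (a * d + b * c) + 2 * e * b * d.

(* A and B are the first two coefficients of N(X (c z + d) + Y (a z + b)), the norm form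
   transformed by (a b; c d). *)
Definition sl2_represents (t e A B : Z) : Prop :=
  exists a b c d, a * d - b * c = 1 /\ qnorm t e d c = A /\ qpolar t e b a d c = B.

Definition only_principal_reduced_form (Q : Z) : Prop :=
  forall A B C, 1 < A -> -A <= B < A -> A <= C -> B * B + Q = 4 * A * C -> False.

(* calL_n in the coordinates x = lambda j, y = n - 2 lambda^2 k, with N = 2 n. *)
Definition lattice_circle (Q N j k : Z) : Prop := j * j + Q * (k * k) + Q = 2 * N * k.

Definition zrange (W : Z) : list Z := map (fun i => Z.of_nat i - W) (seq 0 (Z.to_nat (2 * W + 1))).

Lemma in_zrange W x : Z.abs x <= W -> In x (zrange W).
Proof.
  intros Hx. unfold zrange. apply in_map_iff. exists (Z.to_nat (x + W)).
  split; [lia | apply in_seq; lia].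
Qed.

Section NormForm.

Variables t e Q : Z.
Hypothesis Ht : t = 0 \/ t = 1.
Hypothesis He : 4 * e = Q + t.
Hypothesis HQ : 0 < Q.

Ltac eliminate_e :=
  destruct Ht as [-> | ->]; unfold qnorm, qpolar;
  [replace Q with (4 * e) by lia | replace Q with (4 * e - 1) by lia]; ring.

Lemma qnorm_complete_square a b :
  4 * qnorm t e a b = (2 * a + t * b) * (2 * a + t * b) + Q * (b * b).
Proof. eliminate_e. Qed.

Lemma qnorm_polar_lagrange a b c d :
  4 * qnorm t e a b * qnorm t e c d - qpolar t e a b c d * qpolar t e a b c d
  = Q * ((a * d - b * c) * (a * d - b * c)).
Proof. eliminate_e. Qed.

(* Here k = |c z + d|^2, and since z^2 = t z - e the second norm is
   |c z^2 + (d - a) z - b|^2 = k |z - gamma z|^2 for gamma = (a b; c d). *)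
Lemma qnorm_displacement a b c d :
  let k := qnorm t e d c in
  4 * k * qnorm t e (- (c * e + b)) (c * t + d - a)
  = (qpolar t e b a d c - t * k) * (qpolar t e b a d c - t * k)
    + Q * ((k - (a * d - b * c)) * (k - (a * d - b * c))).
Proof. eliminate_e. Qed.

Lemma qnorm_nonneg a b : 0 <= qnorm t e a b.
Proof.
  pose proof (qnorm_complete_square a b).
  pose proof (Z.square_nonneg (2 * a + t * b)). pose proof (Z.square_nonneg b). nia.
Qed.

Lemma qnorm_bound a b : Z.abs a <= 4 * qnorm t e a b /\ Z.abs b <= 4 * qnorm t e a b.
Proof.
  pose proof (qnorm_complete_square a b) as Hs.
  set (u := 2 * a + t * b) in Hs. set (M := qnorm t e a b) in Hs |- *.
  pose proof (Z.square_nonneg u). pose proof (Z.square_nonneg b).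
  assert (b * b <= 4 * M) by nia. assert (u * u <= 4 * M) by nia.
  assert (Z.abs b <= b * b) by nia. assert (Z.abs u <= u * u) by nia.
  unfold u in *. destruct Ht as [-> | ->]; lia.
Qed.

Lemma qnorm_enumeration M : exists l, NoDup l /\ forall x, In x l <-> qnorm t e (fst x) (snd x) = M.
Proof.
  assert (Hdec : forall x y : Z * Z, {x = y} + {x <> y}) by (decide equality; apply Z.eq_dec).
  set (box := list_prod (zrange (4 * M)) (zrange (4 * M))).
  exists (nodup Hdec (filter (fun x => qnorm t e (fst x) (snd x) =? M) box)).
  split; [apply NoDup_nodup |]. intros [a b].
  rewrite nodup_In, filter_In, Z.eqb_eq. split; [tauto |]. intros Hn. split; [| exact Hn].
  destruct (qnorm_bound a b). cbn in Hn. subst M.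
  apply in_prod; apply in_zrange; assumption.
Qed.

Lemma sl2_represents_translate A B s :
  sl2_represents t e A B -> sl2_represents t e A (B + 2 * A * s).
Proof.
  intros (a & b & c & d & Hdet & <- & <-). exists (a + s * c), (b + s * d), c, d.
  repeat split; [lia | unfold qnorm, qpolar; ring].
Qed.

Lemma sl2_represents_flip A B C :
  0 < C -> B * B + Q = 4 * A * C -> sl2_represents t e C (- B) -> sl2_represents t e A B.
Proof.
  intros HC HB (a & b & c & d & Hdet & HA & HB').
  exists (- c), (- d), a, b. repeat split; [lia | |].
  - pose proof (qnorm_polar_lagrange b a d c) as Hl.
    rewrite HA, HB' in Hl. replace (b * c - a * d) with (-1) in Hl by lia.
    assert (4 * C * (qnorm t e b a - A) = 0) by lia. nia.
  - unfold qpolar in *. lia.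
Qed.

(* Gauss reduction: translate B into [-A, A), then swap A and C while C < A. *)
Lemma sl2_represents_all A B C : only_principal_reduced_form Q ->
  0 < A -> B * B + Q = 4 * A * C -> sl2_represents t e A B.
Proof.
  intros Hred. remember (Z.to_nat A) as m eqn:Hm. revert A B C Hm.
  induction m as [m IH] using lt_wf_ind. intros A B C Hm HA HB.
  set (s := - ((B + A) / (2 * A))).
  set (B' := B + 2 * A * s). set (C' := C + B * s + A * s * s).
  assert (HB' : B' * B' + Q = 4 * A * C') by (unfold B', C'; nia).
  assert (Hrange : -A <= B' < A).
  { unfold B', s. pose proof (Z.div_mod (B + A) (2 * A)).
    pose proof (Z.mod_pos_bound (B + A) (2 * A)). lia. }
  replace B with (B' + 2 * A * (- s)) by (unfold B'; ring).
  apply sl2_represents_translate.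
  destruct (Z_lt_ge_dec C' A) as [HCA | HCA].
  - assert (0 < C') by nia.
    apply (sl2_represents_flip A B' C'); [lia | lia |].
    apply (IH (Z.to_nat C') ltac:(lia) C' (- B') A); [lia | lia | nia].
  - destruct (Z.eq_dec A 1) as [-> | HA1]; [| exfalso; apply (Hred A B' C'); lia].
    assert (B' = -1 \/ B' = 0) as [-> | ->] by lia.
    + exists 1, (-1), 0, 1. unfold qnorm, qpolar. destruct Ht as [-> | ->]; lia.
    + exists 1, 0, 0, 1. unfold qnorm, qpolar. destruct Ht as [-> | ->]; lia.
Qed.

Lemma lattice_circle_odd_sum N j k : t = 1 -> lattice_circle Q N j k -> exists h, j + k = 2 * h + 1.
Proof.
  unfold lattice_circle. intros Ht1 Hc. rewrite Ht1 in He.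
  destruct (Z.Even_or_Odd j) as [[j' ->] | [j' ->]], (Z.Even_or_Odd k) as [[k' ->] | [k' ->]];
    [lia | exists (j' + k'); ring | exists (j' + k'); ring | lia].
Qed.

Lemma lattice_circle_of_sl2 a b c d : a * d - b * c = 1 ->
  let k := qnorm t e d c in
  lattice_circle Q (Q + 2 * qnorm t e (- (c * e + b)) (c * t + d - a))
    (qpolar t e b a d c - t * k) k.
Proof.
  intros Hdet k. pose proof (qnorm_displacement a b c d) as Hdisp.
  cbv zeta in Hdisp. rewrite Hdet in Hdisp. unfold lattice_circle. nia.
Qed.

Lemma sl2_of_lattice_circle F j k :
  only_principal_reduced_form Q -> 0 <= F -> lattice_circle Q (Q + 2 * F) j k ->
  exists a b c d, a * d - b * c = 1 /\ qnorm t e d c = k /\ qpolar t e b a d c - t * k = j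
    /\ qnorm t e (- (c * e + b)) (c * t + d - a) = F.
Proof.
  intros Hred HF Hc. assert (Hk : 0 < k) by (unfold lattice_circle in Hc; nia).
  assert (HC : exists C, (j + t * k) * (j + t * k) + Q = 4 * k * C).
  { unfold lattice_circle in Hc. destruct Ht as [Ht0 | Ht1].
    - exists (2 * e + F - e * k). subst t. nia.
    - destruct (lattice_circle_odd_sum _ j k Ht1 Hc) as [h Hh].
      exists (2 * e + F - e * k + h). subst t. nia. }
  destruct HC as [C HC].
  destruct (sl2_represents_all k (j + t * k) C Hred Hk HC) as (a & b & c & d & Hdet & Hk' & Hj).
  exists a, b, c, d. repeat split; [exact Hdet | exact Hk' | lia |].
  pose proof (lattice_circle_of_sl2 a b c d Hdet) as Hc'. cbv zeta in Hc'.
  rewrite Hk', Hj in Hc'. replace (j + t * k - t * k) with j in Hc' by ring.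
  unfold lattice_circle in Hc, Hc'. nia.
Qed.

Lemma lattice_circle_of_qnorm F a b k :
  qnorm t e a b = F * (Q + F) -> 2 * a + t * b + (Q + 2 * F) = Q * k ->
  lattice_circle Q (Q + 2 * F) b k.
Proof.
  intros Hn Hk. pose proof (qnorm_complete_square a b) as Hs.
  unfold lattice_circle. apply (Z.mul_reg_l _ _ Q); [lia |].
  replace (2 * a + t * b) with (Q * k - (Q + 2 * F)) in Hs by lia. nia.
Qed.

Lemma qnorm_of_lattice_circle F j k : lattice_circle Q (Q + 2 * F) j k ->
  exists a, 2 * a + t * j + (Q + 2 * F) = Q * k /\ qnorm t e a j = F * (Q + F).
Proof.
  intros Hc. assert (Ha : exists a, 2 * a + t * j + (Q + 2 * F) = Q * k).
  { destruct Ht as [Ht0 | Ht1].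
    - exists (2 * e * k - 2 * e - F). lia.
    - destruct (lattice_circle_odd_sum _ j k Ht1 Hc) as [h Hh].
      exists (2 * e * k - 2 * e - F - h). lia. }
  destruct Ha as [a Ha]. exists a. split; [exact Ha |].
  pose proof (qnorm_complete_square a j) as Hs.
  replace (2 * a + t * j) with (Q * k - (Q + 2 * F)) in Hs by lia.
  unfold lattice_circle in Hc. nia.
Qed.

End NormForm.

(** * Counting the lattice points *)

(* (a, b) |-> (j, k) = (b, (2 a + t b + N) / Q) maps the elements of norm F (Q + F) onto
   [lattice_circle Q N], N = Q + 2 F, exactly on those where this divisibility holds. *)
Definition lattice_cond (t Q N : Z) (x : Z * Z) : bool := (2 * fst x + t * snd x + N) mod Q =? 0.

Lemma lattice_cond_spec t Q N x : Q <> 0 ->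
  lattice_cond t Q N x = true <-> (Q | 2 * fst x + t * snd x + N).
Proof. intros HQ. unfold lattice_cond. rewrite Z.eqb_eq. apply Z.mod_divide, HQ. Qed.

Definition flips_evenly {A} (P : A -> Prop) (c : A -> bool) : Prop :=
  exists s : A -> A, forall x, P x -> P (s x) /\ s (s x) = x /\ c (s x) = negb (c x).

Lemma length_filter_flips_evenly {A} (P : A -> Prop) (c : A -> bool) (l : list A) :
  NoDup l -> (forall x, In x l <-> P x) -> flips_evenly P c ->
  length l = (2 * length (filter c l))%nat.
Proof.
  intros Hnd Hl [s Hs]. rewrite <- (filter_length c l).
  assert (Hperm : length (filter (fun x => negb (c x)) l) = length (map s (filter c l))).
  { apply Nat.le_antisymm; apply NoDup_incl_length.
    - apply NoDup_filter, Hnd.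
    - intros x Hx. apply filter_In in Hx as [Hx Hcx]. apply Hl in Hx.
      destruct (Hs x Hx) as (Hsx & Hssx & Hcsx). apply in_map_iff. exists (s x).
      split; [exact Hssx |]. apply filter_In. split; [apply Hl, Hsx |].
      rewrite Hcsx. destruct (c x); easy.
    - apply NoDup_map_NoDup_ForallPairs; [| apply NoDup_filter, Hnd].
      intros x y Hx Hy Hxy. apply filter_In, proj1, Hl in Hx, Hy.
      rewrite <- (proj1 (proj2 (Hs x Hx))), <- (proj1 (proj2 (Hs y Hy))), Hxy. reflexivity.
    - intros x Hx. apply in_map_iff in Hx as (y & <- & Hy). apply filter_In in Hy as [Hy Hcy].
      apply Hl in Hy. destruct (Hs y Hy) as (Hsy & _ & Hcsy). apply filter_In.
      split; [apply Hl, Hsy | rewrite Hcsy, Hcy; reflexivity]. }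
  rewrite Hperm, length_map. lia.
Qed.

Lemma negb_of_iff_not (b1 b2 : bool) (P1 P2 : Prop) :
  (b1 = true <-> P1) -> (b2 = true <-> P2) -> (P2 <-> ~ P1) -> b2 = negb b1.
Proof. destruct b1, b2; simpl; intuition; discriminate. Qed.

Lemma flips_evenly_lattice_cond t e Q N M (s : Z * Z -> Z * Z) : Q <> 0 ->
  (forall x, s (s x) = x) ->
  (forall x, qnorm t e (fst (s x)) (snd (s x)) = qnorm t e (fst x) (snd x)) ->
  (forall x, qnorm t e (fst x) (snd x) = M ->
     (Q | 2 * fst (s x) + t * snd (s x) + N) <-> ~ (Q | 2 * fst x + t * snd x + N)) ->
  flips_evenly (fun x => qnorm t e (fst x) (snd x) = M) (lattice_cond t Q N).
Proof.
  intros HQ Hinv Hnorm Hflip. exists s. intros x Hx. repeat split.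
  - rewrite Hnorm. exact Hx.
  - apply Hinv.
  - apply (negb_of_iff_not _ _ _ _ (lattice_cond_spec _ _ _ _ HQ) (lattice_cond_spec _ _ _ _ HQ)).
    apply Hflip, Hx.
Qed.

(* - conj (a + b z) = (- a - t b) + b z *)
Definition neg_conj (t : Z) (x : Z * Z) : Z * Z := (- fst x - t * snd x, snd x).

Lemma neg_conj_involutive t x : neg_conj t (neg_conj t x) = x.
Proof. destruct x as [a b]. unfold neg_conj. cbn [fst snd]. f_equal. ring. Qed.

Lemma qnorm_neg_conj t e x :
  qnorm t e (fst (neg_conj t x)) (snd (neg_conj t x)) = qnorm t e (fst x) (snd x).
Proof. destruct x as [a b]. unfold neg_conj, qnorm. cbn [fst snd]. ring. Qed.

Section PrimeDiscriminant.

Variables t e Q : Z.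
Hypothesis Ht : t = 0 \/ t = 1.
Hypothesis He : 4 * e = Q + t.
Hypothesis Hp : prime Q.

Lemma prime_lattice_cond_all F a b : (Q | Q + 2 * F) ->
  qnorm t e a b = F * (Q + F) -> (Q | 2 * a + t * b + (Q + 2 * F)).
Proof.
  intros [m Hm] Hn. pose proof (qnorm_complete_square t e Q Ht He a b) as Hs.
  assert (Hu : (Q | (2 * a + t * b) * (2 * a + t * b))).
  { exists (m * m * Q - Q - b * b). nia. }
  apply Z.divide_add_r; [| exists m; exact Hm].
  destruct (prime_mult _ Hp _ _ Hu); assumption.
Qed.

Lemma prime_lattice_cond_neg_conj F a b : 2 < Q -> ~ (Q | Q + 2 * F) ->
  qnorm t e a b = F * (Q + F) ->
  ((Q | 2 * (- a - t * b) + t * b + (Q + 2 * F)) <-> ~ (Q | 2 * a + t * b + (Q + 2 * F))).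
Proof.
  intros HQ2 HN Hn. pose proof (qnorm_complete_square t e Q Ht He a b) as Hs.
  set (N := Q + 2 * F) in *. set (u := 2 * a + t * b) in *.
  replace (2 * (- a - t * b) + t * b + N) with (N - u) by (unfold u; ring).
  split.
  - intros Hminus Hplus. assert (H2N : (Q | 2 * N)).
    { replace (2 * N) with ((N - u) + (u + N)) by ring. apply Z.divide_add_r; assumption. }
    destruct (prime_mult _ Hp _ _ H2N) as [H2 | H2]; [| contradiction].
    apply Z.divide_pos_le in H2; lia.
  - intros Hplus. assert (Hprod : (Q | (N - u) * (u + N))).
    { exists (b * b + Q). unfold N. nia. }
    destruct (prime_mult _ Hp _ _ Hprod); [assumption | contradiction].
Qed.

Lemma lattice_cond_dichotomy_prime F : 2 < Q ->
  let P x := qnorm t e (fst x) (snd x) = F * (Q + F) in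
  ((Q | Q + 2 * F) -> forall x, P x -> lattice_cond t Q (Q + 2 * F) x = true) /\
  (~ (Q | Q + 2 * F) -> flips_evenly P (lattice_cond t Q (Q + 2 * F))).
Proof.
  intros HQ2. cbv zeta. split.
  - intros HN [a b] Hn. apply lattice_cond_spec; [lia |].
    exact (prime_lattice_cond_all F a b HN Hn).
  - intros HN. apply (flips_evenly_lattice_cond _ _ _ _ _ (neg_conj t));
      [lia | apply neg_conj_involutive | apply qnorm_neg_conj |].
    intros [a b] Hn. exact (prime_lattice_cond_neg_conj F a b HQ2 HN Hn).
Qed.

End PrimeDiscriminant.

Lemma gaussian_lattice_cond_all F a b : (4 | 4 + 2 * F) ->
  qnorm 0 1 a b = F * (4 + F) -> (4 | 2 * a + 0 * b + (4 + 2 * F)).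
Proof.
  unfold qnorm. intros [g Hg] Hn.
  destruct (Z.Even_or_Odd a) as [[a' ->] | [a' ->]], (Z.Even_or_Odd b) as [[b' ->] | [b' ->]];
    [exists (a' + g); lia | lia ..].
Qed.

Lemma gaussian_lattice_cond_swap F a b : ~ (4 | 4 + 2 * F) ->
  qnorm 0 1 a b = F * (4 + F) ->
  ((4 | 2 * b + 0 * a + (4 + 2 * F)) <-> ~ (4 | 2 * a + 0 * b + (4 + 2 * F))).
Proof.
  unfold qnorm. intros HF Hn.
  destruct (Z.Even_or_Odd F) as [[g ->] | [g ->]]; [exfalso; apply HF; exists (g + 1); lia |].
  destruct (Z.Even_or_Odd a) as [[a' ->] | [a' ->]], (Z.Even_or_Odd b) as [[b' ->] | [b' ->]];
    [lia | | | lia].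
  - split; [intros _ [m Hm]; lia | intros _; exists (b' + g + 2); lia].
  - split; [intros [m Hm]; lia | intros H; exfalso; apply H; exists (a' + g + 2); lia].
Qed.

Lemma lattice_cond_dichotomy_gaussian F :
  let P x := qnorm 0 1 (fst x) (snd x) = F * (4 + F) in
  ((4 | 4 + 2 * F) -> forall x, P x -> lattice_cond 0 4 (4 + 2 * F) x = true) /\
  (~ (4 | 4 + 2 * F) -> flips_evenly P (lattice_cond 0 4 (4 + 2 * F))).
Proof.
  cbv zeta. split.
  - intros HN [a b] Hn. apply lattice_cond_spec; [lia |].
    exact (gaussian_lattice_cond_all F a b HN Hn).
  - intros HN. apply (flips_evenly_lattice_cond _ _ _ _ _ (fun x => (snd x, fst x)));
      [lia | intros [a b]; reflexivity | intros [a b]; unfold qnorm; cbn [fst snd]; ring |].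
    intros [a b] Hn. exact (gaussian_lattice_cond_swap F a b HN Hn).
Qed.

Lemma sqrt_neg2_lattice_cond_all F a b : (4 | 8 + 2 * F) ->
  qnorm 0 2 a b = F * (8 + F) -> (8 | 2 * a + 0 * b + (8 + 2 * F)).
Proof.
  unfold qnorm. intros [g Hg] Hn.
  destruct (Z.Even_or_Odd a) as [[a' ->] | [a' ->]]; [| lia].
  destruct (Z.Even_or_Odd b) as [[b' ->] | [b' ->]]; [| lia].
  destruct (Z.Even_or_Odd a') as [[a'' ->] | [a'' ->]], (Z.Even_or_Odd g) as [[g' ->] | [g' ->]];
    [exists (a'' + g') | lia | lia | exists (a'' + g' + 1)]; lia.
Qed.

Lemma sqrt_neg2_lattice_cond_neg_conj F a b : ~ (4 | 8 + 2 * F) ->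
  qnorm 0 2 a b = F * (8 + F) ->
  ((8 | 2 * (- a - 0 * b) + 0 * b + (8 + 2 * F)) <-> ~ (8 | 2 * a + 0 * b + (8 + 2 * F))).
Proof.
  unfold qnorm. intros HF Hn.
  destruct (Z.Even_or_Odd F) as [[g ->] | [g ->]]; [exfalso; apply HF; exists (g + 2); lia |].
  destruct (Z.Even_or_Odd a) as [[a' ->] | [a' ->]]; [lia |].
  destruct (Z.Even_or_Odd a') as [[a'' ->] | [a'' ->]], (Z.Even_or_Odd g) as [[g' ->] | [g' ->]].
  - split; [intros [m Hm] [m' Hm']; lia | intros _; exists (- a'' + g' + 1); lia].
  - split; [intros [m Hm]; lia | intros H; exfalso; apply H; exists (a'' + g' + 2); lia].
  - split; [intros [m Hm]; lia | intros H; exfalso; apply H; exists (a'' + g' + 2); lia].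
  - split; [intros [m Hm] [m' Hm']; lia | intros _; exists (- a'' + g' + 1); lia].
Qed.

Lemma lattice_cond_dichotomy_sqrt_neg2 F :
  let P x := qnorm 0 2 (fst x) (snd x) = F * (8 + F) in
  ((4 | 8 + 2 * F) -> forall x, P x -> lattice_cond 0 8 (8 + 2 * F) x = true) /\
  (~ (4 | 8 + 2 * F) -> flips_evenly P (lattice_cond 0 8 (8 + 2 * F))).
Proof.
  cbv zeta. split.
  - intros HN [a b] Hn. apply lattice_cond_spec; [lia |].
    exact (sqrt_neg2_lattice_cond_all F a b HN Hn).
  - intros HN. apply (flips_evenly_lattice_cond _ _ _ _ _ (neg_conj 0));
      [lia | apply neg_conj_involutive | apply qnorm_neg_conj |].
    intros [a b] Hn. exact (sqrt_neg2_lattice_cond_neg_conj F a b HN Hn).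
Qed.

(** * The nine discriminants *)

Definition trace_q (q : nat) : Z := if (Nat.eqb q 4 || Nat.eqb q 8)%bool then 0 else 1.
Definition norm_q (q : nat) : Z := (Z.of_nat q + trace_q q) / 4.

Lemma qlist_params q : In q qlist ->
  4 * norm_q q = Z.of_nat q + trace_q q /\ (trace_q q = 0 \/ trace_q q = 1)
  /\ mu q = (IZR (trace_q q) / 2)%R.
Proof.
  intros Hq. repeat (destruct Hq as [<- | Hq];
    [unfold norm_q, trace_q, mu; simpl; repeat split; lia || lra |]).
  destruct Hq.
Qed.

Lemma qlist_cases q : In q qlist -> Z.of_nat q = 3 \/ Z.of_nat q = 4 \/ Z.of_nat q = 7
  \/ Z.of_nat q = 8 \/ Z.of_nat q = 11 \/ Z.of_nat q = 19 \/ Z.of_nat q = 43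
  \/ Z.of_nat q = 67 \/ Z.of_nat q = 163.
Proof. intros Hq. repeat (destruct Hq as [<- | Hq]; [simpl; lia |]). destruct Hq. Qed.

Lemma qlist_pos q : In q qlist -> 0 < Z.of_nat q.
Proof. intros Hq. pose proof (qlist_cases q Hq). lia. Qed.

(* A reduced form (A, B, C) has 3 A^2 <= Q <= 163, so only A <= 7 needs checking. *)
Lemma qlist_only_principal_reduced_form q : In q qlist -> only_principal_reduced_form (Z.of_nat q).
Proof.
  intros Hq A B C HA HB HC Hdisc. pose proof (qlist_cases q Hq) as Hcases.
  assert (A <= 7) by nia.
  assert (HA' : A = 2 \/ A = 3 \/ A = 4 \/ A = 5 \/ A = 6 \/ A = 7) by lia.
  assert (HB' : B = -7 \/ B = -6 \/ B = -5 \/ B = -4 \/ B = -3 \/ B = -2 \/ B = -1 \/ B = 0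
    \/ B = 1 \/ B = 2 \/ B = 3 \/ B = 4 \/ B = 5 \/ B = 6) by lia.
  remember (Z.of_nat q) as Q. clear Hq HeqQ.
  repeat match goal with H : _ \/ _ |- _ => destruct H as [H | H] end; subst; lia.
Qed.

Lemma prime_of_trial_division p : 1 < p ->
  forallb (fun i => negb (p mod (Z.of_nat i + 2) =? 0)) (seq 0 (Z.to_nat p - 2)) = true -> prime p.
Proof.
  intros Hp Htrial. apply prime_alt. split; [exact Hp |].
  intros n Hn Hdiv. rewrite forallb_forall in Htrial.
  specialize (Htrial (Z.to_nat (n - 2)) ltac:(apply in_seq; lia)).
  rewrite Z2Nat.id, Z.sub_add in Htrial by lia.
  apply Z.mod_divide in Hdiv; [| lia]. rewrite Hdiv in Htrial. discriminate.
Qed.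

Definition cn_modulus (q : nat) : Z := if Nat.even q then 4 else Z.of_nat q.

Lemma lattice_cond_dichotomy q F : In q qlist ->
  let Q := Z.of_nat q in
  let P x := qnorm (trace_q q) (norm_q q) (fst x) (snd x) = F * (Q + F) in
  ((cn_modulus q | Q + 2 * F) ->
     forall x, P x -> lattice_cond (trace_q q) Q (Q + 2 * F) x = true) /\
  (~ (cn_modulus q | Q + 2 * F) -> flips_evenly P (lattice_cond (trace_q q) Q (Q + 2 * F))).
Proof.
  intros Hq. destruct Hq as [<- | [<- | [<- | [<- | [<- | [<- | [<- | [<- | [<- | []]]]]]]]]].
  all: first
    [ exact (lattice_cond_dichotomy_gaussian F)
    | exact (lattice_cond_dichotomy_sqrt_neg2 F)
    | apply (lattice_cond_dichotomy_prime 1 (norm_q _));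
      [right | | apply prime_of_trial_division; [lia |] | cbn; lia]; reflexivity ].
Qed.

(** * The hyperbolic picture *)

Local Open Scope R_scope.

Lemma cn_cond_iff q N : cn_cond q (IZR N / 2) <-> (cn_modulus q | N)%Z.
Proof.
  unfold cn_cond, cn_modulus, divR. pose proof (Nat.even_spec q) as Hspec.
  destruct (Nat.even q).
  - assert (Hev : Nat.Even q) by (apply Hspec; reflexivity). split.
    + intros [[_ [k Hk]] | [Hodd _]]; [| contradiction].
      exists k. apply eq_IZR. rewrite mult_IZR. lra.
    + intros [k Hk]. left. split; [exact Hev |]. exists k. rewrite Hk, mult_IZR. lra.
  - assert (Hodd : ~ Nat.Even q) by (intros Hev; apply Hspec in Hev; discriminate). split.
    + intros [[Hev _] | [_ [k Hk]]]; [contradiction |].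
      exists k. apply eq_IZR. rewrite mult_IZR, <- Hk. field.
    + intros [k Hk]. right. split; [exact Hodd |]. exists k. rewrite <- mult_IZR, <- Hk. field.
Qed.

Lemma lam_pos q : In q qlist -> 0 < lam q.
Proof.
  intros Hq. pose proof (qlist_pos q Hq). unfold lam.
  apply Rdiv_lt_0_compat; [apply sqrt_lt_R0, lt_0_INR; lia | lra].
Qed.

Lemma lam_sq q : lam q ^ 2 = IZR (Z.of_nat q) / 4.
Proof.
  unfold lam. rewrite <- INR_IZR_INZ.
  replace ((sqrt (INR q) / 2) ^ 2) with (sqrt (INR q) ^ 2 / 4) by field.
  rewrite pow2_sqrt by apply pos_INR. reflexivity.
Qed.

Lemma cosh_rho_mobius (m l a b c d : R) : 0 < l -> a * d - b * c = 1 ->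
  let z := (m, l) : C in
  2 * l ^ 2 * cosh_rho z
    (Cdiv (Cplus (Cmult (RtoC a) z) (RtoC b)) (Cplus (Cmult (RtoC c) z) (RtoC d)))
  = 2 * l ^ 2 + ((c * (m * m - l * l) + (d - a) * m - b) ^ 2 + (l * (2 * m * c + d - a)) ^ 2).
Proof.
  intros Hl Hdet z. unfold cosh_rho.
  set (K := (c * m + d) ^ 2 + (c * l) ^ 2).
  assert (HK : 0 < K).
  { unfold K. destruct (Req_dec c 0) as [-> | Hc].
    - assert (Hd : d <> 0) by (intros ->; lra). pose proof (pow2_gt_0 d Hd). nra.
    - pose proof (pow2_gt_0 (c * l) ltac:(apply Rmult_integral_contrapositive; lra)).
      pose proof (pow2_ge_0 (c * m + d)). lra. }
  set (g := Cdiv _ _).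
  assert (Hg : g = (((a * m + b) * (c * m + d) + a * l * (c * l)) / K,
                    ((a * m + b) * (- (c * l)) + a * l * (c * m + d)) / K)).
  { unfold g, z, Cdiv, Cplus, Cmult, Cinv, RtoC. cbn. unfold K. f_equal; field; fold K; lra. }
  assert (HIm : Im g = l / K).
  { rewrite Hg. cbn. transitivity (l * (a * d - b * c) / K); [field | rewrite Hdet; field]; lra. }
  assert (Hdist : Cmod (Cminus z g) ^ 2 =
    ((c * (m * m - l * l) + (d - a) * m - b) ^ 2 + (l * (2 * m * c + d - a)) ^ 2) / K).
  { unfold Cmod. rewrite pow2_sqrt by (apply Rplus_le_le_0_compat; apply pow2_ge_0).
    rewrite Hg. unfold z, Cminus, Cplus, Copp. cbn. unfold K. field. fold K. lra. }
  rewrite Hdist, HIm. unfold z. cbn. field. lra.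
Qed.

Section RealEmbedding.

Variables (t e Q : Z) (l : R).
Hypothesis Ht : (t = 0 \/ t = 1)%Z.
Hypothesis He : (4 * e = Q + t)%Z.
Hypothesis Hl : l ^ 2 = IZR Q / 4.

Ltac embed :=
  rewrite ?Hl; replace (IZR Q) with (4 * IZR e - IZR t)
    by (rewrite <- mult_IZR, <- minus_IZR; f_equal; lia);
  unfold qnorm, qpolar;
  repeat first [rewrite plus_IZR | rewrite minus_IZR | rewrite mult_IZR | rewrite opp_IZR];
  destruct Ht as [-> | ->]; simpl; field.

Lemma embed_qnorm a b : (IZR a + IZR b * (IZR t / 2)) ^ 2 + l ^ 2 * IZR b ^ 2 = IZR (qnorm t e a b).
Proof. embed. Qed.

Lemma embed_polar_shift a b c d :
  let m := IZR t / 2 in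
  2 * l * ((m * IZR a + IZR b) * (m * IZR c + IZR d) + l ^ 2 * IZR a * IZR c
           - m * ((m * IZR c + IZR d) ^ 2 + l ^ 2 * IZR c ^ 2))
  = l * IZR (qpolar t e b a d c - t * qnorm t e d c).
Proof. intros m. unfold m. embed. Qed.

Lemma embed_displacement a b c d :
  let m := IZR t / 2 in
  (IZR c * (m * m - l * l) + (IZR d - IZR a) * m - IZR b) ^ 2
  + (l * (2 * m * IZR c + IZR d - IZR a)) ^ 2
  = IZR (qnorm t e (- (c * e + b)) (c * t + d - a)).
Proof.
  intros m. replace (l * l) with (l ^ 2) by ring.
  replace ((l * (2 * m * IZR c + IZR d - IZR a)) ^ 2)
    with (l ^ 2 * (2 * m * IZR c + IZR d - IZR a) ^ 2) by ring.
  unfold m. embed.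
Qed.

End RealEmbedding.

Definition lattice_point (q : nat) (N : Z) (x : Z * Z) : R * R :=
  (lam q * IZR (snd x),
   IZR N / 2 - 2 * lam q ^ 2 * IZR ((2 * fst x + trace_q q * snd x + N) / Z.of_nat q)).

Section Discriminant.

Variable q : nat.
Hypothesis Hq : In q qlist.

Let t := trace_q q.
Let e := norm_q q.
Let Q := Z.of_nat q.

Lemma Rval_eq a b c d : in_SL2Z a b c d ->
  Rval q a b c d = IZR (Q + 2 * qnorm t e (- (c * e + b)) (c * t + d - a)) / 2.
Proof.
  intros Hdet. destruct (qlist_params q Hq) as (He & Ht & Hmu); fold t e Q in He, Ht, Hmu.
  assert (Hdet' : IZR a * IZR d - IZR b * IZR c = 1).
  { rewrite <- !mult_IZR, <- minus_IZR. unfold in_SL2Z in Hdet. rewrite Hdet. reflexivity. }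
  unfold Rval, mobius, zq. rewrite (cosh_rho_mobius _ _ _ _ _ _ (lam_pos q Hq) Hdet'), Hmu.
  rewrite (embed_displacement t e Q (lam q) Ht He (lam_sq q)), plus_IZR, mult_IZR, lam_sq.
  fold Q. field.
Qed.

Lemma x_gamma_eq a b c d : x_gamma q a b c d = lam q * IZR (qpolar t e b a d c - t * qnorm t e d c).
Proof.
  destruct (qlist_params q Hq) as (He & Ht & Hmu); fold t e Q in He, Ht, Hmu.
  unfold x_gamma. rewrite Hmu. exact (embed_polar_shift t e Q (lam q) Ht He (lam_sq q) a b c d).
Qed.

Lemma y_gamma_eq n c d : y_gamma q n c d = n - 2 * lam q ^ 2 * IZR (qnorm t e d c).
Proof.
  destruct (qlist_params q Hq) as (He & Ht & Hmu); fold t e Q in He, Ht, Hmu.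
  unfold y_gamma. rewrite Hmu, <- (embed_qnorm t e Q (lam q) Ht He (lam_sq q)). ring.
Qed.

Lemma normK_eq ab : normK q ab = IZR (qnorm t e (fst ab) (snd ab)).
Proof.
  destruct (qlist_params q Hq) as (He & Ht & Hmu); fold t e Q in He, Ht, Hmu.
  rewrite <- (embed_qnorm t e Q (lam q) Ht He (lam_sq q)).
  unfold normK, Cmod, zq. rewrite pow2_sqrt by (apply Rplus_le_le_0_compat; apply pow2_ge_0).
  rewrite Hmu. cbn. ring.
Qed.

Lemma in_Nzq_half_integer n : in_Nzq q n -> exists F, (0 <= F)%Z /\ n = IZR (Q + 2 * F) / 2.
Proof.
  intros (a & b & c & d & Hdet & <-).
  destruct (qlist_params q Hq) as (He & Ht & _); fold t e Q in He, Ht.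
  exists (qnorm t e (- (c * e + b)) (c * t + d - a)). split; [| exact (Rval_eq a b c d Hdet)].
  apply (qnorm_nonneg t e Q Ht He), qlist_pos, Hq.
Qed.

Lemma scaled_circle_iff N j k :
  (lam q * IZR j) ^ 2 + (IZR N / 2 - 2 * lam q ^ 2 * IZR k) ^ 2 = (IZR N / 2) ^ 2 - 4 * lam q ^ 4
  <-> lattice_circle Q N j k.
Proof.
  assert (Hdiff : (lam q * IZR j) ^ 2 + (IZR N / 2 - 2 * lam q ^ 2 * IZR k) ^ 2
                  - ((IZR N / 2) ^ 2 - 4 * lam q ^ 4)
                  = IZR Q / 4 * IZR (j * j + Q * (k * k) + Q - 2 * N * k)).
  { replace (lam q ^ 4) with ((lam q ^ 2) ^ 2) by ring.
    replace ((lam q * IZR j) ^ 2) with (lam q ^ 2 * IZR j ^ 2) by ring.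
    rewrite lam_sq. repeat first [rewrite plus_IZR | rewrite minus_IZR | rewrite mult_IZR].
    fold Q. field. }
  assert (HQ : 0 < IZR Q) by (apply IZR_lt, qlist_pos, Hq).
  unfold lattice_circle. split.
  - intros Heq. assert (HD : IZR (j * j + Q * (k * k) + Q - 2 * N * k) = IZR 0).
    { apply (Rmult_eq_reg_l (IZR Q / 4)); [rewrite <- Hdiff, Heq; ring | lra]. }
    apply eq_IZR in HD. lia.
  - intros Heq. apply Rminus_diag_uniq. rewrite Hdiff, Heq. replace (_ - _)%Z with 0%Z by ring.
    ring.
Qed.

Lemma Lcal_iff N p : Lcal q (IZR N / 2) p <->
  exists j k, p = (lam q * IZR j, IZR N / 2 - 2 * lam q ^ 2 * IZR k) /\ lattice_circle Q N j k.
Proof.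
  pose proof (lam_pos q Hq) as Hl. destruct p as [x y]. unfold Lcal. cbn [fst snd]. split.
  - intros (Hc & [m Hm] & [j Hj]). exists j, (- m)%Z.
    assert (Hp : (x, y) = (lam q * IZR j, IZR N / 2 - 2 * lam q ^ 2 * IZR (- m))).
    { rewrite opp_IZR, <- Hm, <- Hj. f_equal; field; lra. }
    split; [exact Hp |]. apply scaled_circle_iff. injection Hp as -> ->. exact Hc.
  - intros (j & k & Hp & Hc). injection Hp as -> ->. split; [| split].
    + apply scaled_circle_iff. exact Hc.
    + exists (- k)%Z. rewrite opp_IZR. field. lra.
    + exists j. field. lra.
Qed.

Lemma L_set_iff_Lcal F p : (0 <= F)%Z ->
  L_set q (IZR (Q + 2 * F) / 2) p <-> Lcal q (IZR (Q + 2 * F) / 2) p.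
Proof.
  intros HF. destruct (qlist_params q Hq) as (He & Ht & _); fold t e Q in He, Ht.
  pose proof (qlist_pos q Hq) as HQ. fold Q in HQ. rewrite Lcal_iff. split.
  - intros (a & b & c & d & Hdet & Hn & Hx & Hy). rewrite (Rval_eq a b c d Hdet) in Hn.
    assert (HFg : qnorm t e (- (c * e + b)) (c * t + d - a) = F).
    { assert (H2 : IZR (Q + 2 * qnorm t e (- (c * e + b)) (c * t + d - a)) = IZR (Q + 2 * F))
        by lra.
      apply eq_IZR in H2. lia. }
    exists (qpolar t e b a d c - t * qnorm t e d c)%Z, (qnorm t e d c). split.
    + destruct p as [x y]. cbn in Hx, Hy. rewrite Hx, Hy, x_gamma_eq, y_gamma_eq. reflexivity.
    + rewrite <- HFg. exact (lattice_circle_of_sl2 t e Q Ht He a b c d Hdet).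
  - intros (j & k & -> & Hc).
    pose proof (qlist_only_principal_reduced_form q Hq) as Hred.
    destruct (sl2_of_lattice_circle t e Q Ht He HQ F j k Hred HF Hc)
      as (a & b & c & d & Hdet & Hk & Hj & HFg).
    exists a, b, c, d. split; [exact Hdet |]. split; [| split].
    + rewrite (Rval_eq a b c d Hdet), HFg. reflexivity.
    + rewrite x_gamma_eq. fold t e. rewrite Hk, Hj. reflexivity.
    + rewrite y_gamma_eq. fold t e. rewrite Hk. reflexivity.
Qed.

Lemma normK_iff F ab :
  normK q ab = (IZR (Q + 2 * F) / 2) ^ 2 - 4 * lam q ^ 4
  <-> (qnorm t e (fst ab) (snd ab) = F * (Q + F))%Z.
Proof.
  replace ((IZR (Q + 2 * F) / 2) ^ 2 - 4 * lam q ^ 4) with (IZR (F * (Q + F))).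
  2:{ replace (lam q ^ 4) with ((lam q ^ 2) ^ 2) by ring.
      rewrite lam_sq, mult_IZR, !plus_IZR, mult_IZR. fold Q. field. }
  rewrite normK_eq. split; [apply eq_IZR | intros ->; reflexivity].
Qed.

Lemma Lcal_enumeration F l : NoDup l ->
  (forall x, In x l <-> qnorm t e (fst x) (snd x) = (F * (Q + F))%Z) ->
  let N := (Q + 2 * F)%Z in
  let l' := map (lattice_point q N) (filter (lattice_cond t Q N) l) in
  NoDup l' /\ forall p, In p l' <-> Lcal q (IZR N / 2) p.
Proof.
  intros Hnd Hl N l'. destruct (qlist_params q Hq) as (He & Ht & _); fold t e Q in He, Ht.
  pose proof (qlist_pos q Hq) as HQ. fold Q in HQ. pose proof (lam_pos q Hq) as Hlam.
  assert (Hcond : forall x, In x (filter (lattice_cond t Q N) l) <->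
            qnorm t e (fst x) (snd x) = (F * (Q + F))%Z
            /\ exists k, (2 * fst x + t * snd x + N = Q * k)%Z).
  { intros x. rewrite filter_In, Hl, lattice_cond_spec by lia.
    split; intros [Hn [k Hk]]; split; try exact Hn; exists k; lia. }
  split.
  - apply NoDup_map_NoDup_ForallPairs; [| apply NoDup_filter, Hnd].
    intros [a b] [a' b'] Hx Hy Heq. apply Hcond in Hx as [_ [k Hk]], Hy as [_ [k' Hk']].
    unfold lattice_point in Heq. cbn [fst snd] in *. apply pair_equal_spec in Heq as [Hb Hdiv].
    apply Rmult_eq_reg_l, eq_IZR in Hb; [| lra]. subst b'. fold t Q in Hdiv.
    rewrite Hk, Hk', !(Z.mul_comm Q), !Z.div_mul in Hdiv by lia.
    assert (k = k') by (apply eq_IZR; pose proof (pow2_gt_0 (lam q)); nra).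
    f_equal. lia.
  - intros p. unfold l'. rewrite in_map_iff, Lcal_iff. split.
    + intros ([a b] & <- & Hx). apply Hcond in Hx as [Hn [k Hk]]. cbn [fst snd] in *.
      exists b, k. split.
      * unfold lattice_point. cbn [fst snd]. fold t Q. rewrite Hk, Z.mul_comm, Z.div_mul by lia.
        reflexivity.
      * exact (lattice_circle_of_qnorm t e Q Ht He HQ F a b k Hn Hk).
    + intros (j & k & -> & Hc).
      destruct (qnorm_of_lattice_circle t e Q Ht He HQ F j k Hc) as (a & Hk & Hn).
      exists (a, j). split.
      * unfold lattice_point. cbn [fst snd]. fold t Q. fold N in Hk.
        rewrite Hk, Z.mul_comm, Z.div_mul by lia. reflexivity.
      * apply Hcond. split; [exact Hn | exists k; exact Hk].
Qed.

Lemma length_filter_lattice_cond F l : NoDup l ->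
  (forall x, In x l <-> qnorm t e (fst x) (snd x) = (F * (Q + F))%Z) ->
  INR (length (filter (lattice_cond t Q (Q + 2 * F)) l))
  = 2 * c_n q (IZR (Q + 2 * F) / 2) * INR (length l).
Proof.
  intros Hnd Hl. destruct (lattice_cond_dichotomy q F Hq) as [Hall Hhalf].
  fold t e Q in Hall, Hhalf.
  unfold c_n. destruct (excluded_middle_informative _) as [Hcn | Hcn]; rewrite cn_cond_iff in Hcn.
  - rewrite forallb_filter_id; [lra |].
    apply forallb_forall. intros x Hx. apply Hall; [exact Hcn | apply Hl, Hx].
  - rewrite (length_filter_flips_evenly _ _ l Hnd Hl (Hhalf Hcn)), mult_INR. cbn [INR]. lra.
Qed.

End Discriminant.

Theorem proposition2p6 (q : nat) (Hq : In q qlist) (n : R) (Hn : in_Nzq q n) :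
  (forall p : R * R, L_set q n p <-> Lcal q n p) /\
  exists (l1 : list (R * R)) (l2 : list (Z * Z)),
    NoDup l1 /\ (forall p, In p l1 <-> Lcal q n p) /\
    NoDup l2 /\ (forall ab, In ab l2 <-> normK q ab = n ^ 2 - 4 * lam q ^ 4) /\
    INR (length l1) = 2 * c_n q n * INR (length l2).
Proof.
  destruct (in_Nzq_half_integer q Hq n Hn) as (F & HF & ->).
  destruct (qlist_params q Hq) as (He & Ht & _).
  split; [intros p; exact (L_set_iff_Lcal q Hq F p HF) |].
  destruct (qnorm_enumeration _ _ _ Ht He (qlist_pos q Hq) (F * (Z.of_nat q + F)))
    as (l2 & Hnd2 & Hl2).
  destruct (Lcal_enumeration q Hq F l2 Hnd2 Hl2) as [Hnd1 Hl1].
  eexists _, l2. split; [exact Hnd1 |]. split; [exact Hl1 |]. split; [exact Hnd2 |]. split.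
  - intros ab. rewrite normK_iff by exact Hq. apply Hl2.
  - rewrite length_map. exact (length_filter_lattice_cond q Hq F l2 Hnd2 Hl2).
Qed.
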